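(* Fix a task $i$ and $L\ge L^{(i)}$. Suppose that at every checkpoint $\nu\in\mathcal S_u$ the interval satisfies $u^{(i)}(\overline y^{(i)}_\nu)\in[\underline u^{(i)}_\nu,\overline u^{(i)}_\nu]$, and that $f^{\star(i)}-\overline y^{(i)}_s\le\epsilon^{f,(i)}_s$ for all $s\ge1$. Then for all $s\ge1$, $$\underline U^{(i)}_s(L)\le U^{(i)}\le\overline U^{(i)}_s(L).$$
   Context: Task $i$ has objective $f^{(i)}$ with maximum $f^{\star(i)}$, incumbents $\overline y^{(i)}_s:=\max_{r\le s}f^{(i)}(x^{(i)}_r)$ (nondecreasing in $s$), utility $u^{(i)}:\mathbb R\to[0,1]$ monotone nondecreasing and $L^{(i)}$-Lipschitz, and $U^{(i)}:=u^{(i)}(f^{\star(i)})$. $\epsilon^{f,(i)}_s>0$ are given gap bounds. Utility is queried at local times in a set $\mathcal S_u\subseteq\mathbb N$, each query $\nu$ producing an interval $[\underline u^{(i)}_\nu,\overline u^{(i)}_\nu]$. Let $\nu=\nu^{(i)}_s:=\max\{r\le s:r\in\mathcal S_u\}$ (most recent checkpoint). Define $\overline u^{(i)}_s(L):=\min\{1,\overline u^{(i)}_\nu+L(\overline y^{(i)}_s-\overline y^{(i)}_\nu)\}$, $\underline u^{(i)}_s(L):=\underline u^{(i)}_\nu$ (and $\overline u^{(i)}_s(L)=1$, $\underline u^{(i)}_s(L)=0$ if no checkpoint has occurred yet), $\underline U^{(i)}_s(L):=\underline u^{(i)}_s(L)$, $\overline U^{(i)}_s(L):=\min\{1,\overline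 u^{(i)}_s(L)+L\epsilon^{f,(i)}_s\}$. *)

From Stdlib Require Import Reals.
Open Scope R_scope.

(* Local time starts at 1;
   for convenience the recursion is anchored at 0 (ybar 0 = f (x 0)),
   but the theorem only uses ybar at times >= 1 via the recursion from 1. *)
Fixpoint incumbent {X : Type} (f : X -> R) (x : nat -> X) (s : nat) : R :=
  match s with
  | O => f (x O)
  | S O => f (x 1%nat)
  | S s' => Rmax (incumbent f x s') (f (x s))
  end.

(* Local times start at 1, so only checkpoints r with 1 <= r <= s count. *)
Fixpoint last_cp (Su : nat -> bool) (s : nat) : option nat :=
  match s with
  | O => None
  | S s' => if Su s then Some s else last_cp Su s'
  end.

Definition u_up (Su : nat -> bool) (ybar : nat -> R) (uhi : nat -> R)
  (L : R) (s : nat) : R :=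
  match last_cp Su s with
  | None => 1
  | Some nu => Rmin 1 (uhi nu + L * (ybar s - ybar nu))
  end.

Definition u_low (Su : nat -> bool) (ulo : nat -> R) (s : nat) : R :=
  match last_cp Su s with
  | None => 0
  | Some nu => ulo nu
  end.

Definition U_low (Su : nat -> bool) (ulo : nat -> R) (L : R) (s : nat) : R :=
  u_low Su ulo s.

Definition U_up (Su : nat -> bool) (ybar uhi : nat -> R) (epsf : nat -> R)
  (L : R) (s : nat) : R :=
  Rmin 1 (u_up Su ybar uhi L s + L * epsf s).

(* Monotonicity of u and ybar_nu <= fstar give the lower bound.  For the
   upper bound, the Lipschitz property splits u fstar - u ybar_nu into
   L (ybar_s - ybar_nu), the progress since the checkpoint, plus
   L (fstar - ybar_s) <= L eps_s, the remaining optimality gap. *)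

From Stdlib Require Import Reals Lra Lia.
Open Scope R_scope.

Section Incumbent.

Variables (X : Type) (f : X -> R) (x : nat -> X).

Lemma incumbent_le (fstar : R) :
  (forall z, f z <= fstar) -> forall s, incumbent f x s <= fstar.
Proof.
  intros Hub s; induction s as [|[|s] IH]; simpl; auto.
  apply Rmax_lub; auto.
Qed.

Lemma incumbent_le_S (s : nat) :
  (1 <= s)%nat -> incumbent f x s <= incumbent f x (S s).
Proof.
  intros Hs; destruct s as [|s]; [lia|].
  apply Rmax_l.
Qed.

Lemma incumbent_monotone (a b : nat) :
  (1 <= a)%nat -> (a <= b)%nat -> incumbent f x a <= incumbent f x b.
Proof.
  intros Ha Hab; induction Hab as [|b Hab IH]; [lra|].
  apply Rle_trans with (1 := IH), incumbent_le_S; lia.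
Qed.

End Incumbent.

Lemma last_cp_Some (Su : nat -> bool) (s nu : nat) :
  last_cp Su s = Some nu -> (1 <= nu <= s)%nat /\ Su nu = true.
Proof.
  induction s as [|s IH]; simpl; [discriminate|].
  destruct (Su (S s)) eqn:E.
  - intros [= <-]; split; [lia | exact E].
  - intros H; destruct (IH H) as [? ?]; split; [lia | assumption].
Qed.

Section Lipschitz.

Variables (u : R -> R) (K : R).
Hypothesis HLip : forall a b, Rabs (u a - u b) <= K * Rabs (a - b).

Lemma lipschitz_const_ge0 : 0 <= K.
Proof.
  pose proof (HLip 1 0) as H; pose proof (Rabs_pos (u 1 - u 0)).
  rewrite Rminus_0_r, Rabs_R1 in H; lra.
Qed.

Lemma lipschitz_increment (L a b : R) :
  K <= L -> a <= b -> u b - u a <= L * (b - a).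
Proof.
  intros HL Hab; pose proof (HLip b a) as H; pose proof (Rle_abs (u b - u a)).
  rewrite (Rabs_right (b - a)) in H by lra.
  pose proof (Rmult_le_compat_r (b - a) K L ltac:(lra) HL); lra.
Qed.

End Lipschitz.

Lemma le_Rmin1_add (t A e : R) :
  t <= 1 -> 0 <= e -> t <= A + e -> t <= Rmin 1 (Rmin 1 A + e).
Proof.
  intros Ht1 He HtA; apply Rmin_glb; [exact Ht1|].
  unfold Rmin at 1; destruct (Rle_dec 1 A); lra.
Qed.

Theorem lemmaD3
  (X : Type) (f : X -> R) (fstar : R)
  (Hmax_ub : forall z, f z <= fstar) (Hmax_att : exists z, f z = fstar)
  (x : nat -> X)
  (u : R -> R) (Li : R)
  (Hu01 : forall t, 0 <= u t <= 1)
  (Hmono : forall a b, a <= b -> u a <= u b)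
  (HLip : forall a b, Rabs (u a - u b) <= Li * Rabs (a - b))
  (epsf : nat -> R) (Heps_pos : forall s, 0 < epsf s)
  (Su : nat -> bool) (ulo uhi : nat -> R)
  (L : R) (HL : Li <= L)
  (Hint : forall nu, Su nu = true ->
     ulo nu <= u (incumbent f x nu) <= uhi nu)
  (Hgap : forall s, (1 <= s)%nat -> fstar - incumbent f x s <= epsf s) :
  forall s, (1 <= s)%nat ->
    U_low Su ulo L s <= u fstar /\
    u fstar <= U_up Su (incumbent f x) uhi epsf L s.
Proof.
  intros s Hs.
  pose proof (lipschitz_const_ge0 u Li HLip) as HLi.
  pose proof (Hu01 fstar) as Hu.
  assert (HLeps : L * (fstar - incumbent f x s) <= L * epsf s)
    by (apply Rmult_le_compat_l; [lra | exact (Hgap s Hs)]).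
  assert (HLeps0 : 0 <= L * epsf s)
    by (apply Rmult_le_pos; [lra | apply Rlt_le, Heps_pos]).
  unfold U_low, U_up, u_low, u_up.
  destruct (last_cp Su s) as [nu|] eqn:Hnu.
  - destruct (last_cp_Some Su s nu Hnu) as [[Hnu1 Hnus] Hcp].
    destruct (Hint nu Hcp) as [Hlo Hhi].
    pose proof (incumbent_le X f x fstar Hmax_ub) as Hle.
    pose proof (incumbent_monotone X f x nu s Hnu1 Hnus).
    pose proof (lipschitz_increment u Li HLip L _ _ HL (Hle nu)).
    split.
    + apply Rle_trans with (1 := Hlo), Hmono, Hle.
    + apply le_Rmin1_add; lra.
  - split; [lra|].
    apply Rmin_glb; lra.
Qed.
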